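(* Let $G=(V,E)$ be a connected graph with positive edge costs $c:E\to\mathbb{R}_+$, let $\alpha\ge1$, and let $(U,\complement{U})$ be an $\alpha$-approximate minimum cut of $G$. Then there exists a subset $T\subseteq\complement{U}$ with $|T|\le\lfloor2\alpha\rfloor+1$ such that $(U,\complement{U})$ is the unique minimum $(U,T)$-terminal cut.
   Context: A cut is a partition of $V$ into two non-empty parts; for $\emptyset\ne U\subsetneq V$ write $\complement{U}=V\setminus U$ and $d(U)$ for the total cost of edges with exactly one endpoint in $U$. Let $\lambda=\min\{d(U):\emptyset\ne U\subsetneq V\}$; $(U,\complement{U})$ is an $\alpha$-approximate minimum cut if $d(U)\le\alpha\lambda$. For disjoint non-empty $S,T\subseteq V$, a cut $(X,\complement{X})$ is an $(S,T)$-terminal cut if $S\subseteq X\subseteq V\setminus T$; a minimum $(S,T)$-terminal cut is one minimizing $d(X)$ among these. *)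

From HB Require Import structures.
From mathcomp Require Import all_boot all_order all_algebra.
From mathcomp Require Import reals.
Set Implicit Arguments. Unset Strict Implicit. Unset Printing Implicit Defensive.
Import Order.TTheory GRing.Theory Num.Theory.
Local Open Scope ring_scope.

Section Cuts.
Variables (R : realType) (V : finType) (e : rel V) (c : V -> V -> R).

Definition simple_graph := symmetric e /\ irreflexive e.
Definition positive_costs :=
  (forall x y, c x y = c y x) /\ (forall x y, e x y -> 0 < c x y).
Definition connected_graph := forall x y : V, connect e x y.

(* d(U): total cost of edges with exactly one endpoint in U
   (each undirected edge counted once, as the ordered pair (inside, outside)). *)
Definition dcut (U : {set V}) : R :=
  \sum_(x in U) \sum_(y in ~: U | e x y) c x y.

Definition is_cut (U : {set V}) : bool := (U != set0) && (U != setT).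

Definition is_min_cut_value (lam : R) :=
  (exists2 W, is_cut W & dcut W = lam) /\ (forall W, is_cut W -> lam <= dcut W).

Definition approx_min_cut (alpha : R) (U : {set V}) :=
  is_cut U /\ exists2 lam, is_min_cut_value lam & dcut U <= alpha * lam.

Definition terminal_cut (S T X : {set V}) : bool :=
  is_cut X && (S \subset X) && (X \subset ~: T).

Definition unique_min_terminal_cut (S T X : {set V}) :=
  [/\ S != set0, T != set0, [disjoint S & T],
      terminal_cut S T X &
      forall Y, terminal_cut S T Y -> Y != X -> dcut X < dcut Y].
End Cuts.

(* Let T be an inclusion-minimal set of vertices outside U for which U is the
   unique minimum (U,T)-terminal cut; ~U itself is such a set.  If k = |T| >= 2,
   minimality yields for each t in T a set X_t containing U, meeting T in {t},
   with d(X_t) <= d(U).  Uncross the X_t: if m(v) counts the X_t containing v,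
   then the private parts {v in X_t | m(v) = 1} (t in T) and the layers
   {v | m(v) >= j} (3 <= j <= k) together separate every pair of vertices at
   most as often as the X_t do.  Each private part is a cut, of cost at least
   the minimum cut value lambda, and each layer is a (U,T)-terminal cut, of cost
   at least d(U).  Hence k lambda + (k - 2) d(U) <= k d(U), i.e.
   k <= 2 d(U) / lambda <= 2 alpha. *)

From Pilot Require Import Defs.
From HB Require Import structures.
From mathcomp Require Import all_boot all_order all_algebra.
From mathcomp Require Import reals.
From mathcomp Require Import zify lra.
Import Order.TTheory GRing.Theory Num.Theory.
Set Implicit Arguments. Unset Strict Implicit.

Lemma sum_threshold_neq k a b :
  \sum_(3 <= j < k.+1) ((j <= a) != (j <= b) : nat) =
  (minn (maxn a 2) (maxn k 2) - minn (maxn b 2) (maxn k 2)) +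
  (minn (maxn b 2) (maxn k 2) - minn (maxn a 2) (maxn k 2)).
Proof.
elim: k => [|k IH]; first by rewrite big_geq //; lia.
have [k_lt2 | k_ge2] := ltnP k 2; first by rewrite big_geq; lia.
rewrite big_nat_recr /= ?IH; last by lia.
by case: (leqP k.+1 a); case: (leqP k.+1 b) => /=; lia.
Qed.

Lemma sum_dist_le_hamming (I : finType) (T : {set I}) (a b : pred I) :
  (\sum_(t in T) a t - \sum_(t in T) b t) + (\sum_(t in T) b t - \sum_(t in T) a t)
  <= \sum_(t in T) (a t != b t).
Proof.
have le_add_hamming (a' b' : pred I) :
    \sum_(t in T) a' t <= \sum_(t in T) b' t + \sum_(t in T) (a' t != b' t).
  by rewrite -big_split; apply: leq_sum => t _; case: (a' t); case: (b' t).
have := le_add_hamming a b; have := le_add_hamming b a.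
have -> : \sum_(t in T) (b t != a t) = \sum_(t in T) (a t != b t).
  by apply: eq_bigr => t _; rewrite eq_sym.
lia.
Qed.

Local Open Scope ring_scope.

Section Uncrossing.
Variables (R : numDomainType) (V : finType) (w : V -> V -> R).
Hypothesis w_ge0 : forall x y, 0 <= w x y.

Definition crossing (P : {set V}) x y : nat := (x \in P) != (y \in P).

Definition cross_weight (m : V -> V -> nat) : R :=
  \sum_x \sum_y (m x y)%:R * w x y.

Definition sym_cut (P : {set V}) : R := cross_weight (crossing P).

Lemma sum_sym_cut (I : Type) (r : seq I) (p : pred I) (F : I -> {set V}) :
  \sum_(i <- r | p i) sym_cut (F i) =
  cross_weight (fun x y => \sum_(i <- r | p i) crossing (F i) x y).
Proof.
rewrite exchange_big; apply: eq_bigr => x _; rewrite exchange_big.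
by apply: eq_bigr => y _; rewrite natr_sum mulr_suml.
Qed.

Lemma cross_weightD m1 m2 :
  cross_weight (fun x y => m1 x y + m2 x y)%N = cross_weight m1 + cross_weight m2.
Proof.
rewrite -big_split; apply: eq_bigr => x _; rewrite -big_split.
by apply: eq_bigr => y _; rewrite natrD mulrDl.
Qed.

Lemma eq_cross_weight m1 m2 : m1 =2 m2 -> cross_weight m1 = cross_weight m2.
Proof. by move=> eq_m; apply: eq_bigr => x _; apply: eq_bigr => y _; rewrite eq_m. Qed.

Lemma cross_weight_swap m : (forall x y, w x y = w y x) ->
  cross_weight (fun x y => m y x) = cross_weight m.
Proof.
move=> w_sym; rewrite [RHS]exchange_big.
by apply: eq_bigr => x _; apply: eq_bigr => y _; rewrite w_sym.
Qed.

Lemma ler_cross_weight m1 m2 : (forall x y, m1 x y <= m2 x y)%N ->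
  cross_weight m1 <= cross_weight m2.
Proof.
move=> le_m; apply: ler_sum => x _; apply: ler_sum => y _.
by rewrite ler_wpM2r // ler_nat.
Qed.

Section Family.
Variables (I : finType) (T : {set I}) (X : I -> {set V}).

Definition mult v := (\sum_(t in T) (v \in X t))%N.
Definition private_part t := [set v in X t | mult v == 1%N].
Definition layer j := [set v | (j <= mult v)%N].

Lemma crossing_uncross x y :
  (\sum_(t in T) crossing (private_part t) x y
  + \sum_(3 <= j < #|T|.+1) crossing (layer j) x y
  <= \sum_(t in T) crossing (X t) x y)%N.
Proof.
rewrite /crossing.
under eq_bigr do rewrite !inE.
under [Z in (_ + Z)%N]eq_bigr do rewrite !inE.
rewrite sum_threshold_neq.
have mult_le v : (mult v <= #|T|)%N.
  by rewrite -sum1_card; apply: leq_sum => t _; case: (v \in X t).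
have mx_le := mult_le x; have my_le := mult_le y.
have dist := sum_dist_le_hamming T (fun t => x \in X t) (fun t => y \in X t).
rewrite -/(mult x) -/(mult y) in dist *.
have [mx1 | mx_neq1] := eqVneq (mult x) 1%N; have [my1 | my_neq1] := eqVneq (mult y) 1%N.
- by under eq_bigr do rewrite !andbT; lia.
- under eq_bigr do rewrite andbT andbF.
  rewrite (eq_bigr (fun t => nat_of_bool (x \in X t))) => [|t _]; last by case: (_ \in _).
  by rewrite -/(mult x); lia.
- under eq_bigr do rewrite andbT andbF.
  rewrite (eq_bigr (fun t => nat_of_bool (y \in X t))) => [|t _]; last by case: (_ \in _).
  by rewrite -/(mult y); lia.
- by rewrite big1 => [|t _]; rewrite ?andbF //; lia.
Qed.

Lemma sym_cut_uncross :
  \sum_(t in T) sym_cut (private_part t) + \sum_(3 <= j < #|T|.+1) sym_cut (layer j)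
  <= \sum_(t in T) sym_cut (X t).
Proof.
rewrite !sum_sym_cut -cross_weightD.
by apply: ler_cross_weight; exact: crossing_uncross.
Qed.

End Family.
End Uncrossing.

Section GraphCuts.
Variables (R : realType) (V : finType) (e : rel V) (c : V -> V -> R).
Hypothesis e_sym : symmetric e.
Hypothesis c_sym : forall x y, c x y = c y x.
Hypothesis c_gt0 : forall x y, e x y -> 0 < c x y.

Definition edge_weight x y : R := if e x y then c x y else 0.

Lemma edge_weight_ge0 x y : 0 <= edge_weight x y.
Proof. by rewrite /edge_weight; case: ifP => // /c_gt0/ltW. Qed.

Lemma edge_weight_sym x y : edge_weight x y = edge_weight y x.
Proof. by rewrite /edge_weight e_sym c_sym. Qed.

Local Notation dcut := (dcut e c).
Local Notation sym_cut := (sym_cut edge_weight).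

Lemma dcutE P : dcut P = cross_weight edge_weight
  (fun x y => (x \in P) && (y \notin P) : nat).
Proof.
rewrite /dcut big_mkcond /=; apply: eq_bigr => x _.
case: (x \in P) => /=; last by rewrite big1 // => y _; rewrite mul0r.
rewrite big_mkcond /=; apply: eq_bigr => y _; rewrite inE /edge_weight.
by case: (y \in P); case: (e x y); rewrite /= ?mul1r ?mul0r.
Qed.

Lemma sym_cutE P : sym_cut P = dcut P *+ 2.
Proof.
have crossingE : crossing P =2 fun x y =>
    ((x \in P) && (y \notin P) + (y \in P) && (x \notin P))%N.
  by move=> x y; rewrite /crossing; case: (x \in P); case: (y \in P).
rewrite /sym_cut (eq_cross_weight _ crossingE) cross_weightD.
have swap := cross_weight_swap (fun x y => (x \in P) && (y \notin P) : nat) edge_weight_sym.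
by rewrite swap -dcutE mulr2n.
Qed.

Lemma cut_has_crossing_edge W : connected_graph e -> is_cut W ->
  [exists x, exists y, [&& x \in W, y \notin W & e x y]].
Proof.
move=> e_conn /andP[/set0Pn[x xW] W_neqT].
have /subsetPn[y _ yW] : ~~ (setT \subset W) by rewrite subTset.
apply: contraTT (e_conn x y) => /existsPn no_edge.
have W_closed : closed e W.
  have e_stay a b : e a b -> a \in W -> b \in W.
    move=> eab aW; apply: contraT => bW.
    by have /existsPn/(_ b) := no_edge a; rewrite aW bW eab.
  by move=> a b eab; apply/idP/idP; apply: e_stay; rewrite // e_sym.
by apply/negP => /(closed_connect W_closed); rewrite xW (negbTE yW).
Qed.

Lemma dcut_gt0 W : connected_graph e -> is_cut W -> 0 < dcut W.
Proof.
move=> e_conn /(cut_has_crossing_edge e_conn)/existsP[x /existsP[y /and3P[xW yW exy]]].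
have c_ge0 a b : e a b -> 0 <= c a b by move/c_gt0/ltW.
rewrite /Defs.dcut (bigD1 x) //= (bigD1 y) /=; last by rewrite inE yW exy.
rewrite -addrA ltr_wpDr ?c_gt0 // addr_ge0 //.
  by apply: sumr_ge0 => b /andP[/andP[_ eab] _]; exact: c_ge0.
by apply: sumr_ge0 => a _; apply: sumr_ge0 => b /andP[_ eab]; exact: c_ge0.
Qed.

Definition isolating_terminals (U T : {set V}) := [&& T \subset ~: U, T != set0 &
  [forall Y : {set V}, [&& U \subset Y, [disjoint Y & T] & Y != U] ==> (dcut U < dcut Y)]].

Lemma isolating_terminals_setC U : U != setT -> isolating_terminals U (~: U).
Proof.
move=> U_neqT.
rewrite /isolating_terminals subxx -setCT (inj_eq (@setC_inj _)) U_neqT /=.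
apply/forallP => Y; apply/implyP => /and3P[sUY].
by rewrite -subsets_disjoint eqEsubset sUY andbT => ->.
Qed.

Lemma isolating_terminals_unique U T : is_cut U -> isolating_terminals U T ->
  unique_min_terminal_cut e c U T U.
Proof.
move=> U_cut /and3P[sTU T_neq0 /forallP U_min].
have disjUT : [disjoint U & T] by rewrite disjoint_sym disjoints_subset.
split=> //; first by case/andP: U_cut.
- by rewrite /terminal_cut U_cut subxx -disjoints_subset.
move=> Y /andP[/andP[_ sUY] sYT] Y_neqU.
by have /implyP := U_min Y; apply; rewrite sUY disjoints_subset sYT.
Qed.

Lemma minimal_isolating_witness U T t :
  minset (isolating_terminals U) T -> (1 < #|T|)%N -> t \in T ->
  exists Y : {set V}, [/\ U \subset Y, Y :&: T = [set t] & dcut Y <= dcut U].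
Proof.
move=> /minsetP[/and3P[sTU _ /forallP U_min] T_min] T_gt1 tT.
have /negP : ~ isolating_terminals U (T :\ t).
  by move/T_min/(_ (subD1set T t))/setP/(_ t); rewrite !inE eqxx tT.
rewrite /isolating_terminals (subset_trans (subD1set T t) sTU) /=.
have -> /= : T :\ t != set0 by rewrite -cards_eq0; have := cardsD1 t T; rewrite tT; lia.
case/forallPn=> Y; rewrite negb_imply -leNgt.
case/andP=> /and3P[sUY disjYT Y_neqU] dY_le.
have : Y :&: T \subset [set t].
  apply/subsetP => z /setIP[zY zT]; rewrite inE.
  by apply: contraFT (disjointFr disjYT zY) => z_neq_t; rewrite !inE z_neq_t.
rewrite subset1 => /orP[/eqP YT1 | /eqP YT0]; first by exists Y.
have /implyP := U_min Y; rewrite sUY -setI_eq0 YT0 eqxx Y_neqU => /(_ isT).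
by rewrite ltNge dY_le.
Qed.

Section Counting.
Variables (U T : {set V}) (X : V -> {set V}).
Hypothesis T_isolating : isolating_terminals U T.
Hypothesis U_sub_X : forall t, t \in T -> U \subset X t.
Hypothesis X_meet_T : forall t, t \in T -> X t :&: T = [set t].

Local Notation mult := (mult T X).
Local Notation private_part := (private_part T X).
Local Notation layer := (layer T X).

Lemma mult_U u : u \in U -> mult u = #|T|.
Proof.
by move=> uU; rewrite -sum1_card; apply: eq_bigr => t tT; rewrite (subsetP (U_sub_X tT)).
Qed.

Lemma mult_T t : t \in T -> mult t = 1%N.
Proof.
move=> tT; rewrite /mult (bigD1 t) //= big1 => [|s /andP[sT s_neq_t]].
  by have /setP/(_ t) := X_meet_T tT; rewrite !inE eqxx tT andbT => ->.
by have /setP/(_ t) := X_meet_T sT; rewrite !inE tT andbT eq_sym (negbTE s_neq_t) => ->.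
Qed.

Lemma private_part_is_cut t : U != set0 -> (1 < #|T|)%N -> t \in T ->
  is_cut (private_part t).
Proof.
move=> /set0Pn[u uU] T_gt1 tT; apply/andP; split.
  apply/set0Pn; exists t; rewrite inE mult_T // eqxx andbT.
  by have /setP/(_ t) := X_meet_T tT; rewrite !inE eqxx tT andbT.
apply/negP => /eqP privT; have := in_setT u; rewrite -privT inE mult_U //.
by case: eqP T_gt1 => [-> | _]; rewrite ?andbF.
Qed.

Lemma dcut_layer_ge j : (3 <= j <= #|T|)%N -> dcut U <= dcut (layer j).
Proof.
case/andP=> j_ge3 j_le; case/and3P: T_isolating => _ _ /forallP/(_ (layer j)) /implyP.
have [-> // | layer_neqU U_min] := eqVneq (layer j) U.
apply/ltW/U_min; rewrite andbT; apply/andP; split.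
  by apply/subsetP => u uU; rewrite inE mult_U.
rewrite disjoint_sym disjoints_subset; apply/subsetP => t tT.
by rewrite !inE mult_T // -ltnNge (leq_trans _ j_ge3).
Qed.

Lemma card_isolating_le lam : U != set0 -> (1 < #|T|)%N ->
  (forall W, is_cut W -> lam <= dcut W) ->
  (forall t, t \in T -> dcut (X t) <= dcut U) ->
  #|T|%:R * lam <= dcut U *+ 2.
Proof.
move=> U_neq0 T_gt1 lam_min X_le.
have priv_ge : \sum_(t in T) lam *+ 2 <= \sum_(t in T) sym_cut (private_part t).
  apply: ler_sum => t tT; rewrite sym_cutE; apply: ler_wMn2r.
  by apply: lam_min; apply: private_part_is_cut.
have layer_ge : \sum_(3 <= j < #|T|.+1) dcut U *+ 2
                <= \sum_(3 <= j < #|T|.+1) sym_cut (layer j).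
  rewrite big_nat_cond [leRHS]big_nat_cond; apply: ler_sum => j /andP[j_range _].
  by rewrite sym_cutE; apply/ler_wMn2r/dcut_layer_ge.
have X_le2 : \sum_(t in T) sym_cut (X t) <= \sum_(t in T) dcut U *+ 2.
  by apply: ler_sum => t tT; rewrite sym_cutE; apply/ler_wMn2r/X_le.
have uncross := sym_cut_uncross edge_weight_ge0 T X.
have := le_trans (lerD priv_ge layer_ge) (le_trans uncross X_le2).
rewrite !sumr_const sumr_const_nat subSS -{3}(subnK T_gt1) mulrnDr addrC lerD2l.
by rewrite mulr_natl mulrnAC lerMn2r.
Qed.

End Counting.

Lemma card_minimal_isolating_le U T lam : U != set0 ->
  minset (isolating_terminals U) T -> (1 < #|T|)%N ->
  (forall W, is_cut W -> lam <= dcut W) -> #|T|%:R * lam <= dcut U *+ 2.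
Proof.
move=> U_neq0 T_min T_gt1 lam_min.
have witness t : exists Y : {set V}, t \in T ->
    [/\ U \subset Y, Y :&: T = [set t] & dcut Y <= dcut U].
  have [tT | _] := boolP (t \in T); last by exists set0.
  by have [Y Y_spec] := minimal_isolating_witness T_min T_gt1 tT; exists Y.
have [X X_spec] := fin_all_exists witness.
by apply: (card_isolating_le (X := X) (minsetp T_min)) => // t /X_spec[].
Qed.

End GraphCuts.

Unset Implicit Arguments.

Theorem corollary2p4 (R : realType) (V : finType) (e : rel V) (c : V -> V -> R)
  (alpha : R) (U : {set V}) :
  simple_graph e -> positive_costs e c -> connected_graph e ->
  1 <= alpha -> approx_min_cut e c alpha U ->
  exists T : {set V},
    [/\ T \subset ~: U,
        (#|T|%:Z <= Num.floor (2 * alpha) + 1)%R &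
        unique_min_terminal_cut e c U T U].
Proof.
move=> [e_sym _] [c_sym c_gt0] e_conn alpha_ge1.
move=> [U_cut [lam [[W W_cut dW] lam_min] dU_le]].
have lam_gt0 : 0 < lam by rewrite -dW (dcut_gt0 e_sym c_gt0).
have /andP[U_neq0 U_neqT] := U_cut.
have [T T_min _] := minset_exists (isolating_terminals_setC e c U_neqT).
have T_isolating := minsetp T_min.
have card_le : #|T|%:R <= 2 * alpha.
  have [T_le1 | T_gt1] := leqP #|T| 1.
    have : #|T|%:R <= 1 :> R by rewrite lern1.
    lra.
  rewrite -(ler_pM2r lam_gt0).
  have := card_minimal_isolating_le e_sym c_sym c_gt0 U_neq0 T_min T_gt1 lam_min.
  move/le_trans; apply.
  by rewrite -mulrA mulr_natl; apply: ler_wMn2r.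
exists T; split; last exact: isolating_terminals_unique.
- by case/and3P: T_isolating.
- by rewrite -[leLHS]addr0 lerD // floor_ge_int.
Qed.
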